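(* Let $G$ be a finite simple graph with edge weight function $w$ and vertex weight function $w_1$, let $u$ be a vertex of $G$, and let $T=T(G,u)$ be the weighted path-tree of $G$ with respect to $u$. Then $$\frac{\eta_{(w,w_1)}(G\setminus u,x)}{\eta_{(w,w_1)}(G,x)}=\frac{\eta_{(w,w_1)}(T\setminus u,x)}{\eta_{(w,w_1)}(T,x)}.$$
   Context: An edge weight function $w$ assigns a nonzero complex number to each edge; a vertex weight function $w_1$ assigns a real number (possibly $0$) to each vertex; subgraphs carry restricted weights; $G\setminus u$ deletes $u$ and its incident edges. For $A\subseteq E(G)$, $w(A)=\prod_{e\in A}w(e)$. $\mu_w(G,x)=\sum_{M}(-1)^{|M|}|w(M)|^2x^{n-2|M|}$ over all matchings $M$ (including empty). $\eta_{(w,w_1)}(G,x)=\sum_{S\subseteq V(G)}(-1)^{|V(G)\setminus S|}\big(\prod_{v\in V(G)\setminus S}w_1(v)\big)\mu_w(G[S],x)$ with $G[S]$ the induced subgraph; $\mu_w,\eta$ of the empty graph equal $1$. The path-tree $T(G,u)$ has as vertices the paths in $G$ starting at $u$ (the trivial path $u$ included, and denoted $u$); two such paths are adjacent iff one is obtained from the other by appending one vertex, i.e. $p'=p\,y$ where $y$ is adjacent in $G$ to the last vertex $z$ of $p$; this edge gets weight $w(e_{zy})$. The vertex $u$ of $T$ gets weight $w_1(u)$, and a path of length at least $1$ gets weight $w_1$ of its endpoint other than $u$. *)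

From HB Require Import structures.
From mathcomp Require Import all_boot all_order all_algebra.
From mathcomp Require Import complex.
Set Implicit Arguments. Unset Strict Implicit. Unset Printing Implicit Defensive.
Import Order.TTheory GRing.Theory Num.Theory.
Local Open Scope ring_scope.

Section WeightedGraph.
Variables (R : rcfType) (T : finType).

Definition simple_graph (E : {set {set T}}) : Prop :=
  forall f, f \in E -> #|f| = 2%N.

Definition sqnorm (z : R[i]) : R := (ComplexField.Normc.normc z) ^+ 2.

Definition matching_in (E : {set {set T}}) (S : {set T}) (M : {set {set T}}) : bool :=
  [&& M \subset E, [forall f in M, f \subset S] & trivIset M].

Definition mu_w (w : {set T} -> R[i]) (E : {set {set T}}) (S : {set T}) : {poly R} :=
  \sum_(M : {set {set T}} | matching_in E S M)
     ((-1) ^+ #|M| * \prod_(f in M) sqnorm (w f)) *: 'X^(#|S| - 2 * #|M|).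

Definition eta_w (w : {set T} -> R[i]) (w1 : T -> R) (E : {set {set T}})
    (S : {set T}) : {poly R} :=
  \sum_(S' : {set T} | S' \subset S)
     ((-1) ^+ #|S :\: S'| * \prod_(v in S :\: S') w1 v) *: mu_w w E S'.

End WeightedGraph.

Section PathTree.
Variables (R : rcfType) (V : finType).

Fixpoint seqs_upto (n : nat) : seq (seq V) :=
  if n is n'.+1 then [::] :: [seq x :: s | x <- enum V, s <- seqs_upto n']
  else [:: [::]].

Definition adj (E : {set {set V}}) : rel V := fun x y => [set x; y] \in E.

Definition is_upath (E : {set {set V}}) (u : V) (p : seq V) : bool :=
  if p is x :: s then [&& x == u, path (adj E) x s & uniq p] else false.

Definition upaths (E : {set {set V}}) (u : V) : seq (seq V) :=
  undup [seq p <- seqs_upto #|V| | is_upath E u p].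

Lemma seqs_upto_complete n (p : seq V) : (size p <= n)%N -> p \in seqs_upto n.
Proof.
elim: n p => [|n IH] [|x s] //= Hs.
rewrite in_cons /=; apply/allpairsP; exists (x, s) => /=.
by rewrite mem_enum IH.
Qed.

Lemma upaths_complete E u p : is_upath E u p -> p \in upaths E u.
Proof.
move=> Hp; rewrite mem_undup mem_filter Hp seqs_upto_complete //.
case: p Hp => [//|x s] /and3P [_ _ Hu]; by rewrite -(card_uniqP Hu) max_card.
Qed.

Definition ptree_vertex (E : {set {set V}}) (u : V) := seq_sub (upaths E u).

Variables (E : {set {set V}}) (u : V).
Local Notation VT := (ptree_vertex E u).

Definition endpt (p : VT) : V := last u (val p).

Definition ptree_edges : {set {set VT}} :=
  [set f : {set VT} | [exists p : VT, exists q : VT,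
      (f == [set p; q]) && (val q == rcons (val p) (endpt q))]].

(* the edge {p, p y} with z the last vertex of p gets weight w(e_{zy});
   {z, y} is exactly the image of {p, p y} under endpt *)
Definition ptree_w (w : {set V} -> R[i]) (f : {set VT}) : R[i] := w (endpt @: f).

Definition ptree_w1 (w1 : V -> R) (p : VT) : R := w1 (endpt p).

Definition ptree_minus_root : {set VT} := [set p : VT | val p != [:: u]].

End PathTree.

Arguments endpt {V} E u p.
Arguments ptree_w {R V} E u w f.
Arguments ptree_w1 {R V} E u w1 p.
Arguments ptree_edges {V} E u.
Arguments ptree_minus_root {V} E u.

(* Expanding over matchings,
     eta(G[S]) = sum_M (-1)^|M| |w(M)|^2 prod_(v in S, v uncovered by M) (x - w1(v)),
   so eta satisfies the vertex recurrence
     eta(G) = (x - w1(z)) eta(G \ z) - sum_(v ~ z) |w(zv)|^2 eta(G \ z \ v)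
   and is multiplicative over unions of vertex sets with no edge between them.
   For a path p from u with vertex set P and endpoint z, the subtree T_p of the
   extensions of p is the path-tree of G \ (P \ z) at z, and
     eta(G \ P) eta(T_p) = eta(T_p \ p) eta(G \ (P \ z))
   holds by induction from the leaves: expand both sides by the recurrence at z
   and at p; the term of a neighbour v of z off P matches the term of the child
   c = p v, by the induction hypothesis for c and the factorisations
   eta(T_p \ p) = eta(T_c) eta(Q) and eta(T_p \ p \ c) = eta(T_c \ c) eta(Q).
   The theorem is the case p = u. *)

From HB Require Import structures.
From mathcomp Require Import all_boot all_order all_algebra.
From mathcomp Require Import complex zify.
Set Implicit Arguments. Unset Strict Implicit. Unset Printing Implicit Defensive.
Import GRing.Theory Num.Theory.
Local Open Scope ring_scope.

Lemma prod_addr_subsets (R : comPzSemiRingType) (T : finType) (F G : T -> R)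
    (U : {set T}) :
  \prod_(i in U) (F i + G i) =
  \sum_(A : {set T} | A \subset U) (\prod_(i in A) F i * \prod_(i in U :\: A) G i).
Proof.
elim: {U}_.+1 {-2}U (ltnSn #|U|) => // n IH U ltUn.
have [->|[x xU]] := set_0Vmem U.
  rewrite big_set0 (big_pred1 set0) => [|A]; last by rewrite subset0.
  by rewrite setD0 !big_set0 mulr1.
have ltU'n : (#|U :\ x| < n)%N by rewrite (cardsD1 x U) xU in ltUn.
rewrite (big_setD1 x) //= IH // mulrDl !mulr_sumr.
rewrite [RHS](bigID (fun A : {set T} => x \in A)) /=; congr (_ + _).
  rewrite [RHS](reindex_onto (fun A => x |: A) (fun A => A :\ x)) /=; last first.
    by move=> A /andP[_ xA]; apply: setD1K.
  apply: eq_big => [A|A sAU'].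
    rewrite setU11 andbT; apply/idP/andP => [sAU'|[sAU /eqP <-]]; last exact: setSD.
    have /subsetD1P[sAU xA] := sAU'.
    by rewrite setU1K // eqxx subUset sub1set xU.
  have /subsetD1P[_ xA] := sAU'.
  by rewrite big_setU1 //= -setDDl mulrA.
rewrite [RHS](eq_bigl (fun A : {set T} => A \subset U :\ x)) => [|A]; last by rewrite subsetD1.
apply: eq_bigr => A; rewrite subsetD1 => /andP[_ xA].
rewrite [\prod_(i in U :\: A) _](big_setD1 x) /=; last by rewrite inE xA.
by rewrite !setDDl setUC mulrCA.
Qed.

Lemma setUDK (T : finType) (A B : {set T}) : A \subset B -> A :|: B :\: A = B.
Proof. by move/setUidPr; rewrite setDE setUIr setUCr setIT. Qed.

Lemma prefix_shorter (T : eqType) (a b c : seq T) :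
  prefix a c -> prefix b c -> (size a <= size b)%N -> prefix a b.
Proof. by rewrite !prefixE => /eqP ac /eqP bc ab; rewrite -bc take_takel // ac. Qed.

Lemma prod_XsubC_subsets (R : comNzRingType) (T : finType) (a : T -> R)
    (U : {set T}) :
  \prod_(v in U) ('X - (a v)%:P) =
  \sum_(A : {set T} | A \subset U)
     ((-1) ^+ #|U :\: A| * \prod_(v in U :\: A) a v) *: 'X^#|A|.
Proof.
rewrite prod_addr_subsets; apply: eq_bigr => A _.
by rewrite prodr_const prodrN -mul_polyC mulrC rmorphM rmorph_prod rmorph_sign.
Qed.

Section MatchingExpansion.
Variables (R : rcfType) (T : finType) (E : {set {set T}}).
Variables (w : {set T} -> R[i]) (w1 : T -> R).
Hypothesis simpleE : simple_graph E.

Local Notation eta := (eta_w w w1 E).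

Definition matching_weight (M : {set {set T}}) : R :=
  (-1) ^+ #|M| * \prod_(f in M) sqnorm (w f).

Definition vertex_poly (S : {set T}) : {poly R} := \prod_(v in S) ('X - (w1 v)%:P).

Lemma matching_inE S M :
  matching_in E S M = [&& M \subset E, cover M \subset S & trivIset M].
Proof. by rewrite /matching_in; congr [&& _, _ & _]; apply/forall_inP/bigcupsP. Qed.

Lemma edge_neq0 f : f \in E -> f != set0.
Proof. by move/simpleE => cf; rewrite -cards_eq0 cf. Qed.

Lemma card_cover_matching S M : matching_in E S M -> #|cover M| = (2 * #|M|)%N.
Proof.
rewrite matching_inE => /and3P[sME _ /eqP <-].
rewrite (eq_bigr (fun _ => 2%N)) => [|f fM]; last exact/simpleE/(subsetP sME).
by rewrite sum_nat_const mulnC.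
Qed.

Lemma eta_w_matchings S :
  eta S = \sum_(M | matching_in E S M) matching_weight M *: vertex_poly (S :\: cover M).
Proof.
rewrite /eta_w /mu_w; under eq_bigr do rewrite scaler_sumr.
rewrite (exchange_big_dep (matching_in E S)) /= => [|S' M sS']; last first.
  by rewrite !matching_inE => /and3P[-> cS' ->]; rewrite (subset_trans cS' sS').
apply: eq_bigr => M mM; have := mM; rewrite matching_inE => /and3P[sME cS tM].
set C := cover M; rewrite /vertex_poly prod_XsubC_subsets scaler_sumr.
rewrite (reindex_onto (fun A => C :|: A) (fun S' => S' :\: C)) /=; last first.
  move=> S' /andP[_]; rewrite matching_inE => /and3P[_ cS' _].
  exact: setUDK.
apply: eq_big => [A|A].
  rewrite subsetD subUset cS matching_inE sME subsetUl tM /= andbT.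
  by rewrite setDUl setDv set0U; congr (_ && _); apply/eqP/setDidPl.
rewrite setDUl setDv set0U => /andP[_ /eqP/setDidPl dAC].
rewrite cardsU (disjoint_setI0 _) 1?disjoint_sym // cards0 subn0.
by rewrite (card_cover_matching mM) addKn -setDDl !scalerA mulrC.
Qed.

Lemma matching_in_setU1 (S e : {set T}) (M : {set {set T}}) :
  e \in E -> e \subset S -> e \notin M ->
  matching_in E S (e |: M) = matching_in E (S :\: e) M.
Proof.
move=> eE eS eM; rewrite !matching_inE subUset sub1set eE /=.
have [sME /=|//] := boolP (M \subset E).
have M0 : set0 \notin M by apply/negP => /(subsetP sME)/edge_neq0; rewrite eqxx.
rewrite /cover big_setU1 //= subUset eS subsetD; case: (_ \subset S) => //=.
apply/idP/andP => [tUM|[dMe tM]].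
  split; last by apply: trivIsetS tUM; apply: subsetUr.
  rewrite disjoint_sym; apply: bigcup_disjoint => f fM.
  apply: (trivIsetP tUM); [exact: setU11 | exact: setU1r | ].
  by apply: contraNneq eM => ->.
have e_disj_M : {in M, forall f : {set T}, [disjoint e & f]}.
  by move=> f fM; rewrite disjoint_sym; apply: disjointWl dMe; apply: bigcup_sup.
by case: (trivIsetU1 e_disj_M tM M0).
Qed.

Lemma edge_notin_matching (S e : {set T}) (M : {set {set T}}) :
  e \in E -> matching_in E (S :\: e) M -> e \notin M.
Proof.
move=> /edge_neq0/set0Pn[x xe]; rewrite matching_inE => /and3P[_ cM _].
apply/negP => eM.
by have /setDP[_ /negP] := subsetP cM x (subsetP (bigcup_sup _ eM) x xe).
Qed.

Lemma sum_matchings_with_edge (S e : {set T}) : e \in E -> e \subset S ->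
  \sum_(M | matching_in E S M && (e \in M))
     matching_weight M *: vertex_poly (S :\: cover M) =
  - (sqnorm (w e) *: eta (S :\: e)).
Proof.
move=> eE eS; rewrite eta_w_matchings scaler_sumr -sumrN.
rewrite (reindex_onto (fun M => e |: M) (fun M => M :\ e)) /=; last first.
  by move=> M /andP[_]; apply: setD1K.
apply: eq_big => [M|M /andP[_ /eqP eM]].
  rewrite setU11 andbT; have [eM|eM] := boolP (e \in M).
    rewrite (negbTE (contraL (@edge_notin_matching S e M eE) eM)).
    by apply/negbTE; apply: contraTN eM => /andP[_ /eqP <-]; rewrite setD11.
  by rewrite setU1K // eqxx andbT matching_in_setU1.
have {}eM : e \notin M by rewrite -eM setD11.
rewrite /matching_weight cardsU1 eM big_setU1 //= exprS /cover big_setU1 //= setDDl.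
by rewrite scalerA -scaleNr mulN1r !mulNr mulrCA.
Qed.

Lemma matching_partner (S : {set T}) (M : {set {set T}}) z :
  matching_in E S M -> z \in cover M ->
  exists v0, forall v,
    [&& v \in S :\ z, [set z; v] \in E & [set z; v] \in M] = (v == v0).
Proof.
rewrite matching_inE => /and3P[sME cM tM] /bigcupP[f fM zf].
have fE := subsetP sME f fM.
have [v0 [zv0 ef]] : exists v0, z != v0 /\ f = [set z; v0].
  have /eqP/cards2P[x [y [xy fxy]]] := simpleE fE.
  move: zf; rewrite fxy !inE => /orP[/eqP->|/eqP->]; first by exists y.
  by exists x; rewrite eq_sym setUC.
subst f.
exists v0 => v; apply/idP/eqP => [/and3P[vSz _ zvM]|->]; last first.
  rewrite !inE eq_sym zv0 fM fE (subsetP cM) ?andbT //.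
  by apply/bigcupP; exists [set z; v0]; rewrite ?set22.
have zv_f : [set z; v] = [set z; v0].
  apply/eqP; apply: contraT => ne.
  by have := disjointFr ((trivIsetP tM) _ _ zvM fM ne) (set21 z v); rewrite set21.
have : v \in [set z; v0] by rewrite -zv_f set22.
by rewrite !inE => /orP[/eqP vz|/eqP //]; move: vSz; rewrite vz setD11.
Qed.

Lemma eta_w_vertex_rec (S : {set T}) z : z \in S ->
  eta S = ('X - (w1 z)%:P) * eta (S :\ z) -
    \sum_(v in S :\ z | [set z; v] \in E) sqnorm (w [set z; v]) *: eta (S :\ z :\ v).
Proof.
move=> zS; rewrite [LHS]eta_w_matchings (bigID (fun M => z \in cover M)) /= addrC.
congr (_ + _).
  rewrite eta_w_matchings mulr_sumr; apply: eq_big => [M|M /andP[_ zM]].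
    rewrite !matching_inE subsetD1.
    by case: (M \subset E); case: (trivIset M); rewrite /= ?andbT ?andbF.
  rewrite -scalerAr /vertex_poly (big_setD1 z) /=; last by rewrite inE zM.
  by rewrite !setDDl setUC.
rewrite -sumrN (eq_bigr (fun v => \sum_(M | matching_in E S M && ([set z; v] \in M))
    matching_weight M *: vertex_poly (S :\: cover M))) => [|v /andP[/setD1P[_ vS] zvE]].
  rewrite (exchange_big_dep (fun M => matching_in E S M && (z \in cover M))) /=.
    apply: eq_bigr => M /andP[mM zM]; have [v0 v0P] := matching_partner mM zM.
    by rewrite (big_pred1 v0) // => v; rewrite /= mM -andbA v0P.
  by move=> v M _ /andP[-> zvM]; apply/bigcupP; exists [set z; v]; rewrite ?set21.
by rewrite setDDl sum_matchings_with_edge // subUset !sub1set zS vS.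
Qed.

Lemma eta_w_set0 : eta set0 = 1.
Proof.
rewrite eta_w_matchings (big_pred1 set0) => [|M].
  by rewrite set0D /matching_weight /vertex_poly cards0 !big_set0 mulr1 scale1r.
apply/idP/eqP => [mM|->]; last first.
  by rewrite matching_inE sub0set /cover big_set0 subxx /trivIset /cover !big_set0 cards0.
have := card_cover_matching mM; move: mM; rewrite matching_inE subset0 => /and3P[_ /eqP-> _].
by rewrite cards0 => /esym/eqP; rewrite muln_eq0 cards_eq0 => /eqP.
Qed.

Lemma eta_w_setU (S1 S2 : {set T}) : [disjoint S1 & S2] ->
  (forall x y, x \in S1 -> y \in S2 -> [set x; y] \notin E) ->
  eta (S1 :|: S2) = eta S1 * eta S2.
Proof.
elim: {S1}_.+1 {-2}S1 (ltnSn #|S1|) => // n IH S1 ltS1n dS12 noE.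
have [->|[z zS1]] := set_0Vmem S1; first by rewrite set0U eta_w_set0 mul1r.
have notS2 y : y \in S1 -> y \notin S2 by move=> yS1; rewrite (disjointFr dS12 yS1).
have setUD1 (X : {set T}) y : y \in S1 -> (X :|: S2) :\ y = (X :\ y) :|: S2.
  move=> yS1; apply/setP => x; rewrite !inE.
  by case: eqP => [->|] //=; rewrite (negPf (notS2 _ yS1)).
have IHsub (X : {set T}) : X \subset S1 :\ z -> eta (X :|: S2) = eta X * eta S2.
  move=> sX; have sXS1 := subset_trans sX (subD1set S1 z).
  apply: IH; last by move=> x y /(subsetP sXS1); apply: noE.
    apply: leq_ltn_trans (subset_leq_card sX) _.
    by rewrite (cardsD1 z S1) zS1 in ltS1n.
  exact: disjointWl sXS1 dS12.
have zS : z \in S1 :|: S2 by rewrite inE zS1.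
rewrite (eta_w_vertex_rec zS) (eta_w_vertex_rec zS1) setUD1 // IHsub //.
rewrite [RHS]mulrBl -mulrA; congr (_ - _).
rewrite (eq_bigl (fun v => (v \in S1 :\ z) && ([set z; v] \in E))) => [|v].
  rewrite mulr_suml; apply: eq_bigr => v /andP[/setD1P[_ vS1] _].
  by rewrite setUD1 // IHsub ?scalerAl // subD1set.
rewrite inE; case: (v \in S2) (noE z v zS1) => [/(_ isT)/negPf->|_].
  by rewrite !andbF.
by rewrite orbF.
Qed.

End MatchingExpansion.

Section PathTreeIdentity.
Variables (R : rcfType) (V : finType) (E : {set {set V}}).
Variables (w : {set V} -> R[i]) (w1 : V -> R) (u : V).
Hypothesis simpleE : simple_graph E.

Local Notation VT := (ptree_vertex E u).
Local Notation TE := (ptree_edges E u).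
Local Notation endpt := (endpt E u).
Local Notation etaG := (eta_w w w1 E).
Local Notation etaT := (eta_w (ptree_w E u w) (ptree_w1 E u w1) TE).

Lemma mem_upaths p : (p \in upaths E u) = is_upath E u p.
Proof.
apply/idP/idP; last exact: upaths_complete.
by rewrite mem_undup mem_filter => /andP[].
Qed.

Lemma ptree_vertex_upath (q : VT) : is_upath E u (val q).
Proof. by rewrite -mem_upaths; apply: valP. Qed.

Lemma size_ptree_vertex (q : VT) : (size (val q) <= #|V|)%N.
Proof.
have := ptree_vertex_upath q; case: (val q) => [//|x s] /and3P[_ _ uq].
by rewrite -(card_uniqP uq) max_card.
Qed.

Lemma endpt_mem (p : VT) : endpt p \in val p.
Proof.
by have := ptree_vertex_upath p; rewrite /endpt; case: (val p) => // x s _ /=; exact: mem_last.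
Qed.

Definition is_child (p q : VT) : bool := val q == rcons (val p) (endpt q).

Lemma size_child p q : is_child p q -> size (val q) = (size (val p)).+1.
Proof. by move/eqP->; rewrite size_rcons. Qed.

Lemma child_irr p : ~~ is_child p p.
Proof. by apply/negP => /size_child/eqP; rewrite eqn_leq ltnn andbF. Qed.

Lemma child_neq p q : is_child p q -> p != q.
Proof. by apply: contraTneq => ->; apply: child_irr. Qed.

Lemma ptree_edgesP f : f \in TE -> exists p q, f = [set p; q] /\ is_child p q.
Proof. by rewrite inE => /existsP[p /existsP[q /andP[/eqP-> pq]]]; exists p, q. Qed.

Lemma simple_ptree : simple_graph TE.
Proof. by move=> f /ptree_edgesP[p [q [-> /child_neq pq]]]; rewrite cards2 pq. Qed.

Lemma set2_ptree_edges p q : ([set p; q] \in TE) = is_child p q || is_child q p.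
Proof.
apply/idP/orP => [/ptree_edgesP[a [b [pq_ab ab]]]|].
  have: (a \in [set p; q]) && (b \in [set p; q]) by rewrite pq_ab set21 set22.
  rewrite !inE => /andP[/orP[]/eqP eqa /orP[]/eqP eqb]; subst a b;
    by [left | right | rewrite (negPf (child_irr _)) in ab].
by rewrite inE; case=> [pq|qp]; apply/existsP;
  [exists p; apply/existsP; exists q | exists q; apply/existsP; exists p; rewrite setUC];
  rewrite eqxx.
Qed.

Definition subtree (p : VT) : {set VT} := [set q | prefix (val p) (val q)].

Lemma subtree_refl p : p \in subtree p.
Proof. by rewrite inE prefix_refl. Qed.

Lemma size_subtree p q : q \in subtree p -> q != p -> (size (val p) < size (val q))%N.
Proof.
rewrite inE => /prefixP[[|x r] eq_q] nqp; last by rewrite eq_q size_cat addnS ltnS leq_addr.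
by rewrite cats0 in eq_q; rewrite (val_inj eq_q) eqxx in nqp.
Qed.

Lemma child_prefix p q : is_child p q -> prefix (val p) (val q).
Proof. by move/eqP->; apply: prefix_rcons. Qed.

Lemma subtree_child p c : is_child p c -> subtree c \subset subtree p :\ p.
Proof.
move=> pc; apply/subsetP => q; rewrite !inE => cq.
rewrite (prefix_trans (child_prefix pc) cq) andbT.
by apply: contraTneq cq => ->; apply/negP => /size_prefix; rewrite (size_child pc) ltnn.
Qed.

Lemma subtree_child_edge p c a b : is_child p c -> is_child a b ->
  a \in subtree p :\ p -> (a \in subtree c) = (b \in subtree c).
Proof.
move=> pc ab /setD1P[ap pa]; rewrite !inE; apply/idP/idP => [ca|cb].
  exact: prefix_trans ca (child_prefix ab).
by apply: prefix_shorter cb (child_prefix ab) _; rewrite (size_child pc) size_subtree.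
Qed.

Lemma subtree_no_cross_edge p c x y : is_child p c -> x \in subtree c ->
  y \in (subtree p :\ p) :\: subtree c -> [set x; y] \notin TE.
Proof.
move=> pc xc /setDP[yp yc]; have xp := subsetP (subtree_child pc) x xc.
rewrite set2_ptree_edges negb_or; apply/andP; split; apply: contra yc => child_xy.
  by rewrite -(subtree_child_edge pc child_xy xp).
by rewrite (subtree_child_edge pc child_xy yp).
Qed.

Lemma eta_subtree_split p c (X : {set VT}) : is_child p c -> X \subset subtree c ->
  etaT (X :|: (subtree p :\ p) :\: subtree c) =
  etaT X * etaT ((subtree p :\ p) :\: subtree c).
Proof.
move=> pc Xc; apply: (eta_w_setU _ _ simple_ptree).
  by apply: disjointWl Xc _; rewrite disjoint_sym disjoints_subset setDE subsetIr.
by move=> x y /(subsetP Xc) xc; apply: subtree_no_cross_edge pc xc.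
Qed.

Lemma eta_subtree_minus_root p c : is_child p c ->
  etaT (subtree p :\ p) = etaT (subtree c) * etaT ((subtree p :\ p) :\: subtree c).
Proof.
by move=> pc; rewrite -(eta_subtree_split pc (subxx _)) setUDK ?subtree_child.
Qed.

Lemma eta_subtree_minus_child p c : is_child p c ->
  etaT (subtree p :\ p :\ c) =
  etaT (subtree c :\ c) * etaT ((subtree p :\ p) :\: subtree c).
Proof.
move=> pc; rewrite -(eta_subtree_split pc (subD1set _ _)).
rewrite -{1}(setUDK (subtree_child pc)) setDUl; congr (etaT (_ :|: _)).
by apply/setDidPl; rewrite disjoint_sym disjoints1 in_setD subtree_refl.
Qed.

Lemma eta_subtree_rec p :
  etaT (subtree p) = ('X - (w1 (endpt p))%:P) * etaT (subtree p :\ p) -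
    \sum_(q | is_child p q) sqnorm (ptree_w E u w [set p; q]) *: etaT (subtree p :\ p :\ q).
Proof.
rewrite (eta_w_vertex_rec _ _ simple_ptree (subtree_refl p)); congr (_ * _ - _).
apply: eq_bigl => q; rewrite set2_ptree_edges.
apply/andP/idP => [[/setD1P[qp pq] /orP[//|qp']]|pq].
  by have := size_subtree pq qp; rewrite (size_child qp') ltnNge leqnSn.
by split; [apply: (subsetP (subtree_child pq)); apply: subtree_refl | rewrite pq].
Qed.

Definition extend (p : VT) (v : V) : VT := insubd p (rcons (val p) v).

Lemma is_upath_rcons (p : VT) v :
  is_upath E u (rcons (val p) v) = (v \notin val p) && adj E (endpt p) v.
Proof.
have := ptree_vertex_upath p; rewrite /endpt; case: (val p) => [//|x s].
rewrite /is_upath /= rcons_path mem_rcons rcons_uniq => /and3P[-> -> /= /andP[xs ->]].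
rewrite !inE (negPf xs) orbF negb_or eq_sym andbT.
by case: (adj E _ v); rewrite /= ?andbT ?andbF.
Qed.

Lemma val_extend p v :
  is_upath E u (rcons (val p) v) -> val (extend p v) = rcons (val p) v.
Proof. by move=> pv; rewrite /extend insubdK // mem_upaths. Qed.

Lemma sum_children p (F : VT -> {poly R}) :
  \sum_(q | is_child p q) F q =
  \sum_(v | (v \notin val p) && adj E (endpt p) v) F (extend p v).
Proof.
rewrite (reindex_onto (extend p) endpt) /= => [|q pq]; last first.
  by apply: val_inj; rewrite val_extend -(eqP pq) ?ptree_vertex_upath.
apply: eq_bigl => v; rewrite -is_upath_rcons.
have [pv|npv] := boolP (is_upath E u _).
  by rewrite /is_child /endpt val_extend // last_rcons !eqxx.
by rewrite /extend /insubd insubN ?mem_upaths //= (negPf (child_irr p)).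
Qed.

Definition subtree_identity (p : VT) : Prop :=
  etaG (~: [set x in val p]) * etaT (subtree p) =
  etaT (subtree p :\ p) * etaG (endpt p |: ~: [set x in val p]).

Lemma subtree_identity_children p :
  (forall c, is_child p c -> subtree_identity c) -> subtree_identity p.
Proof.
move=> IH; rewrite /subtree_identity.
set z := endpt p; set P := [set x in val p].
have zP : z \in P by rewrite inE endpt_mem.
rewrite (eta_w_vertex_rec _ _ simpleE (setU11 z _)) setU1K ?in_setC ?zP //.
rewrite eta_subtree_rec sum_children.
rewrite [in RHS](eq_bigl (fun v => (v \notin val p) && adj E z v)) => [|v]; last first.
  by rewrite !inE.
set b := etaG (~: P); set B := etaT (subtree p :\ p).
rewrite !mulrBr [b * \sum_(_ | _) _]mulr_sumr [B * \sum_(_ | _) _]mulr_sumr.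
congr (_ - _); first by rewrite mulrCA [RHS]mulrCA [b * B]mulrC.
apply: eq_bigr => v pv; rewrite -is_upath_rcons in pv.
set c := extend p v; have val_c : val c = rcons (val p) v by apply: val_extend.
have endpt_c : endpt c = v by rewrite /endpt val_c last_rcons.
have pc : is_child p c by rewrite /is_child endpt_c val_c.
have -> : ptree_w E u w [set p; c] = w [set z; v].
  by rewrite /ptree_w imsetU1 imset_set1 endpt_c.
rewrite -!scalerAr (eta_subtree_minus_child pc) /B (eta_subtree_minus_root pc).
have := IH c pc; rewrite /subtree_identity endpt_c.
have -> : ~: [set x in val c] = ~: P :\ v.
  by apply/setP => x; rewrite val_c !inE mem_rcons inE negb_or andbC.
rewrite setD1K => [IHc|]; last by rewrite is_upath_rcons in pv; case/andP: pv; rewrite !inE.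
by rewrite mulrA [b * _]mulrC -IHc -mulrA mulrC.
Qed.

Lemma subtree_identity_all p : subtree_identity p.
Proof.
elim: {p}_.+1 {-2}p (ltnSn (#|V| - size (val p))) => // n IH p ltpn.
apply: subtree_identity_children => c pc; apply: IH.
by have := size_ptree_vertex c; rewrite (size_child pc) in ltpn *; lia.
Qed.

Lemma root_upath : [:: u] \in upaths E u.
Proof. by rewrite mem_upaths /is_upath /= eqxx. Qed.

Definition ptree_root : VT := Sub [:: u] root_upath.

Lemma subtree_root : subtree ptree_root = setT.
Proof.
apply/setP => -[s sP]; rewrite !inE prefixE /=.
by move: sP; rewrite mem_upaths; case: s => [//|x s] /and3P[/eqP-> _ _]; rewrite /= take0 eqxx.
Qed.

Lemma ptree_minus_rootE : ptree_minus_root E u = setT :\ ptree_root.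
Proof. by apply/setP => q; rewrite !inE andbT -(inj_eq val_inj). Qed.

Lemma vertices_root : [set x in val ptree_root] = [set u].
Proof. by apply/setP => x; rewrite !inE. Qed.

End PathTreeIdentity.

Theorem theorem3p1 (R : rcfType) (V : finType) (E : {set {set V}})
    (w : {set V} -> R[i]) (w1 : V -> R) (u : V) :
  simple_graph E ->
  (forall f, f \in E -> w f != 0) ->
  eta_w w w1 E [set~ u] *
    eta_w (ptree_w E u w) (ptree_w1 E u w1) (ptree_edges E u) setT =
  eta_w (ptree_w E u w) (ptree_w1 E u w1) (ptree_edges E u) (ptree_minus_root E u) *
    eta_w w w1 E setT.
Proof.
move=> simpleE _.
have := subtree_identity_all w w1 simpleE (ptree_root E u).
by rewrite /subtree_identity vertices_root subtree_root ptree_minus_rootE setUCr.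
Qed.
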